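(* Let $\mathrm F=(W,\bm{\Box})$ be a monotonic and transitive neighborhood frame. Then its rm-closure $\mathrm F^{\bullet}=(W,\bm{\Box}^{\bullet})$ is transitive: $\bm{\Box}^{\bullet}X\subseteq\bm{\Box}^{\bullet}\bm{\Box}^{\bullet}X$ for all $X\subseteq W$.
   Context: A neighborhood frame is $(W,\bm{\Box})$ with $W\neq\varnothing$ and $\bm{\Box}:\mathcal P(W)\to\mathcal P(W)$. It is monotonic if $X\subseteq Y$ implies $\bm{\Box}X\subseteq\bm{\Box}Y$, and transitive if $\bm{\Box}X\subseteq\bm{\Box}\bm{\Box}X$ for all $X$. The supplementation of a function $\bm{\Box}'$ is $\bm{\Box}'^{\#}X=\bigcup\{\bm{\Box}'Y:Y\subseteq X\}$; the intersection closure is $\bm{\Box}'^{*}X=\bigcup\{\bm{\Box}'X_1\cap\dots\cap\bm{\Box}'X_n:n\ge1,\ X=X_1\cap\dots\cap X_n\}$. The rm-closure is $\bm{\Box}^{\bullet}=\bm{\Box}^{*\#}$ (the supplementation of the intersection closure of $\bm{\Box}$), which equals $\bm{\Box}^{\#*}$. *)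

From Stdlib Require Import List.
Import ListNotations.

Definition subset {W : Type} (X Y : W -> Prop) : Prop := forall w, X w -> Y w.

Definition nonempty (W : Type) : Prop := exists w : W, True.

Definition monotonic {W : Type} (Box : (W -> Prop) -> (W -> Prop)) : Prop :=
  forall X Y, subset X Y -> subset (Box X) (Box Y).

Definition transitive {W : Type} (Box : (W -> Prop) -> (W -> Prop)) : Prop :=
  forall X, subset (Box X) (Box (Box X)).

Definition supplementation {W : Type} (Box' : (W -> Prop) -> (W -> Prop))
  : (W -> Prop) -> (W -> Prop) :=
  fun X w => exists Y, subset Y X /\ Box' Y w.

(* Finite intersection of a list of sets (empty list gives the full set;
   only used on nonempty lists below). *)
Fixpoint big_inter {W : Type} (l : list (W -> Prop)) : W -> Prop :=
  match l with
  | [] => fun _ => True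
  | X :: l' => fun w => X w /\ big_inter l' w
  end.

Definition intersection_closure {W : Type} (Box' : (W -> Prop) -> (W -> Prop))
  : (W -> Prop) -> (W -> Prop) :=
  fun X w => exists l : list (W -> Prop),
    l <> [] /\ X = big_inter l /\ big_inter (map Box' l) w.

Definition rm_closure {W : Type} (Box : (W -> Prop) -> (W -> Prop))
  : (W -> Prop) -> (W -> Prop) :=
  supplementation (intersection_closure Box).

From Stdlib Require Import List.
Import ListNotations.

(* If w lies in Box X1 ∩ ... ∩ Box Xn with X1 ∩ ... ∩ Xn ⊆ X, then by
   transitivity w also lies in Box (Box X1) ∩ ... ∩ Box (Box Xn), while
   Box X1 ∩ ... ∩ Box Xn ⊆ Box• X; so the sets Box Xi witness w ∈ Box• Box• X. *)

Lemma rm_closure_intro {W : Type} (Box : (W -> Prop) -> (W -> Prop))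
    (l : list (W -> Prop)) (X : W -> Prop) :
  l <> [] -> subset (big_inter l) X ->
  subset (big_inter (map Box l)) (rm_closure Box X).
Proof.
  intros Hl HlX w Hw.
  exists (big_inter l); split; [exact HlX |].
  exists l; auto.
Qed.

Lemma big_inter_map_transitive {W : Type} (Box : (W -> Prop) -> (W -> Prop))
    (l : list (W -> Prop)) :
  transitive Box ->
  subset (big_inter (map Box l)) (big_inter (map Box (map Box l))).
Proof.
  intros Ht; induction l as [|X l IH]; intros w Hw; simpl in *; [exact I |].
  destruct Hw as [HX Hl]; split; [apply Ht, HX | apply IH, Hl].
Qed.

Lemma rm_closure_transitive {W : Type} (Box : (W -> Prop) -> (W -> Prop)) :
  transitive Box -> transitive (rm_closure Box).
Proof.
  intros Ht X w [Y [HYX [l [Hl [-> Hw]]]]].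
  apply (rm_closure_intro Box (map Box l)).
  - intros Hnil; apply Hl, (map_eq_nil _ _ Hnil).
  - apply rm_closure_intro; assumption.
  - apply big_inter_map_transitive; assumption.
Qed.

Theorem mainTheorem11 (W : Type) (Box : (W -> Prop) -> (W -> Prop)) :
  nonempty W -> monotonic Box -> transitive Box ->
  transitive (rm_closure Box).
Proof.
  intros _ _; apply rm_closure_transitive.
Qed.
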